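(* Let $k$ be an infinite field of characteristic $0$. If $H_1=(L_1,V_1),H_2=(L_2,V_2)\in\Xi$ are automorphically equivalent representations, then the Lie algebras with projection-derivation $\mathcal{F}(H_1)$ and $\mathcal{F}(H_2)$ are automorphically equivalent.
   Context: A representation $(L,V)$: Lie algebra $L$ over $k$, $k$-vector space $V$ which is an $L$-module (action $l\circ v$); homomorphism $(\varphi,\psi)$: Lie homomorphism $\varphi$ and linear $\psi$ with $\varphi(l)\circ\psi(v)=\psi(l\circ v)$. $\Xi$ is the class of all representations. $W(X,Y)=(L(X),A(X)Y)$ is the free representation ($L(X)$ free Lie algebra, $A(X)$ free unital associative algebra, $A(X)Y$ free $A(X)$-module with basis $Y$). With countably infinite $X^0,Y^0$, $\Xi^0$ is the category of $W(X,Y)$, $X\subset X^0,Y\subset Y^0$ finite, with all homomorphisms. A Lie algebra with projection-derivation is a Lie algebra $M$ with a linear $p$ such that $p^2=p$ and $p[m_1,m_2]=[pm_1,m_2]+[m_1,pm_2]$; $\Theta$ is the variety of these (homomorphisms commute with $p$); with a countably infinite $M^0$, $\Theta^0$ is the category of free algebras $F(M)$ of $\Theta$, $M\subset M^0$ finite, with all homomorphisms. $\mathcal{F}(L,V)=(L\oplus V,p_V)$ with bracket $[l_1+v_1,l_2+v_2]=[l_1,l_2]+l_1\circ v_2-l_2\circ v_1$ and $p_V(l+v)=v$. Closed sets: for an algebra $H$ (in $\Xi$ or $\Theta$), a free object $W$ of $\Xi^0$ (resp. $\Theta^0$) and a subset $T$ of $W$ (in $\Xi$ a pair $(T_1,T_2)$,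 $T_1\subseteq L(X)$, $T_2\subseteq A(X)Y$), $T'_H$ is the set of homomorphisms $W\to H$ whose kernel contains $T$ (in $\Xi$: $T_1\subseteq\ker\varphi$, $T_2\subseteq\ker\psi$), $T''_H$ is the intersection of their kernels (componentwise in $\Xi$), $T$ is $H$-closed if $T''_H=T$, and $Cl_H(W)$ is the set of $H$-closed subsets. For objects $W_1,W_2$ and a congruence $T$ of $W_2$, $\beta_{W_1,W_2}(T)$ is the relation on $\mathrm{Hom}(W_1,W_2)$ consisting of pairs of homomorphisms agreeing modulo $T$ on every element (in $\Xi$, sortwise modulo $T_1$ and $T_2$). $H_1,H_2$ are automorphically equivalent if there are an automorphism $\Phi$ of the category ($\Xi^0$, resp. $\Theta^0$) and bijections $\alpha_W:Cl_{H_1}(W)\to Cl_{H_2}(\Phi(W))$ for all objects $W$ such that $\Phi(\beta_{W_1,W_2}(T))=\beta_{\Phi(W_1),\Phi(W_2)}(\alpha_{W_2}(T))$ for all objects $W_1,W_2$ and all $T\in Cl_{H_1}(W_2)$ ($\Phi$ applied componentwise to pairs of morphisms). *)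

From HB Require Import structures.
From mathcomp Require Import all_boot all_algebra.
From mathcomp Require Import finmap.
Set Implicit Arguments. Unset Strict Implicit. Unset Printing Implicit Defensive.
Import GRing.Theory.
Local Open Scope ring_scope.

Section Defs.
Variable k : fieldType.

Definition lin (U V : lmodType k) (f : U -> V) :=
  forall (a : k) (x y : U), f (a *: x + y) = a *: f x + f y.

Lemma lin_id (U : lmodType k) : lin (@id U).
Proof. by []. Qed.

Lemma lin_comp (U V W : lmodType k) (f : V -> W) (g : U -> V) :
  lin f -> lin g -> lin (f \o g).
Proof. by move=> hf hg a x y /=; rewrite hg hf. Qed.

Record lieSig := LieSig { lcar : lmodType k; lbr : lcar -> lcar -> lcar }.

Definition is_lie (L : lieSig) :=
  [/\ forall x : lcar L, lin (lbr x),
      forall y : lcar L, lin (fun x => lbr x y),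
      forall x : lcar L, lbr x x = 0 &
      forall x y z : lcar L, lbr x (lbr y z) + lbr y (lbr z x) + lbr z (lbr x y) = 0].

Definition is_lie_hom (L1 L2 : lieSig) (f : lcar L1 -> lcar L2) :=
  lin f /\ forall x y, f (lbr x y) = lbr (f x) (f y).

Record repSig := RepSig {
  rL : lieSig; rV : lmodType k; ract : lcar rL -> rV -> rV }.

Definition is_rep (H : repSig) :=
  [/\ is_lie (rL H),
      forall l : lcar (rL H), lin (ract l),
      forall v : rV H, lin (fun l => ract l v) &
      forall (l1 l2 : lcar (rL H)) (v : rV H), ract (lbr l1 l2) v = ract l1 (ract l2 v) - ract l2 (ract l1 v)].

Definition is_rep_hom (H1 H2 : repSig) (phi : lcar (rL H1) -> lcar (rL H2))
    (psi : rV H1 -> rV H2) :=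
  [/\ is_lie_hom phi, lin psi & forall l v, ract (phi l) (psi v) = psi (ract l v)].

Definition rhom (H1 H2 : repSig) :=
  {fg : (lcar (rL H1) -> lcar (rL H2)) * (rV H1 -> rV H2) | is_rep_hom fg.1 fg.2}.

Lemma rhom_id_proof (H : repSig) : is_rep_hom (H1 := H) (H2 := H) id id.
Proof. by split => //; split. Qed.

Definition rhom_id (H : repSig) : rhom H H :=
  exist (fun fg => is_rep_hom fg.1 fg.2) (id, id) (rhom_id_proof H).

Lemma rhom_comp_proof (H1 H2 H3 : repSig) (g : rhom H2 H3) (f : rhom H1 H2) :
  is_rep_hom ((proj1_sig g).1 \o (proj1_sig f).1) ((proj1_sig g).2 \o (proj1_sig f).2).
Proof.
case: g f => [[g1 g2] [[lg1 bg1] lg2 ag]] [[f1 f2] [[lf1 bf1] lf2 af]] /=; simpl in *.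
split; first split.
- exact: lin_comp.
- by move=> x y /=; rewrite bf1 bg1.
- exact: lin_comp.
- by move=> l v /=; rewrite ag af.
Qed.

Definition rhom_comp (H1 H2 H3 : repSig) (g : rhom H2 H3) (f : rhom H1 H2)
  : rhom H1 H3 := exist (fun fg => is_rep_hom fg.1 fg.2) (_, _) (rhom_comp_proof g f).

(* Free representation W(X,Y) of Xi on the finite sets X, Y of natural
   numbers (X^0 = Y^0 = nat), given by its universal property in Xi:
   [ix] (resp. [iy]) sends x \in X (resp. y \in Y) to the corresponding
   free generator of L(X) (resp. of A(X)Y); values outside X, Y are
   irrelevant. *)
Definition is_free_rep (X Y : {fset nat}) (W : repSig)
    (ix : nat -> lcar (rL W)) (iy : nat -> rV W) :=
  is_rep W /\
  forall H : repSig, is_rep H ->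
  forall (f : nat -> lcar (rL H)) (g : nat -> rV H),
  exists! h : rhom W H,
    (forall x, x \in X -> (proj1_sig h).1 (ix x) = f x) /\
    (forall y, y \in Y -> (proj1_sig h).2 (iy y) = g y).

Record freeRepFamily := FreeRepFamily {
  FW : {fset nat} -> {fset nat} -> repSig;
  FWx : forall X Y, nat -> lcar (rL (FW X Y));
  FWy : forall X Y, nat -> rV (FW X Y);
  FW_free : forall X Y, @is_free_rep X Y (FW X Y) (FWx X Y) (FWy X Y) }.

Section XiCategory.
Variable F : freeRepFamily.

Definition xobj := ({fset nat} * {fset nat})%type.
Definition xW (A : xobj) : repSig := FW F A.1 A.2.

Definition is_xi_aut (Po : xobj -> xobj)
    (Pm : forall A B, rhom (xW A) (xW B) -> rhom (xW (Po A)) (xW (Po B))) :=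
  [/\ bijective Po,
      forall A B, bijective (Pm A B),
      forall A, Pm A A (rhom_id (xW A)) = rhom_id (xW (Po A)) &
      forall A B C (f : rhom (xW A) (xW B)) (g : rhom (xW B) (xW C)),
        Pm A C (rhom_comp g f) = rhom_comp (Pm B C g) (Pm A B f)].

(* closed sets : T = (T1, T2), T1 \subseteq L(X), T2 \subseteq A(X)Y *)
Definition xsub (W : repSig) := ((lcar (rL W) -> Prop) * (rV W -> Prop))%type.

Definition xT' (H W : repSig) (T : xsub W) (h : rhom W H) : Prop :=
  (forall w, T.1 w -> (proj1_sig h).1 w = 0) /\ (forall v, T.2 v -> (proj1_sig h).2 v = 0).

Definition xT'' (H W : repSig) (T : xsub W) : xsub W :=
  (fun w => forall h : rhom W H, xT' T h -> (proj1_sig h).1 w = 0,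
   fun v => forall h : rhom W H, xT' T h -> (proj1_sig h).2 v = 0).

Definition xClosed (H W : repSig) := {T : xsub W | xT'' H T = T}.

Definition xbeta (H : repSig) (W1 W2 : repSig) (T : xClosed H W2)
    (f g : rhom W1 W2) : Prop :=
  (forall w, (proj1_sig T).1 ((proj1_sig f).1 w - (proj1_sig g).1 w)) /\
  (forall v, (proj1_sig T).2 ((proj1_sig f).2 v - (proj1_sig g).2 v)).

Definition xi_aut_equiv (H1 H2 : repSig) : Prop :=
  exists (Po : xobj -> xobj)
         (Pm : forall A B, rhom (xW A) (xW B) -> rhom (xW (Po A)) (xW (Po B)))
         (alpha : forall A, xClosed H1 (xW A) -> xClosed H2 (xW (Po A))),
    [/\ is_xi_aut Pm,
        forall A, bijective (alpha A) &
        forall A B (T : xClosed H1 (xW B)) (f' g' : rhom (xW (Po A)) (xW (Po B))),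
          (exists f g, [/\ Pm A B f = f', Pm A B g = g' & xbeta T f g])
          <-> xbeta (alpha B T) f' g'].
End XiCategory.

Record pdSig := PdSig { pL : lieSig; pp : lcar pL -> lcar pL }.

Definition is_theta (M : pdSig) :=
  [/\ is_lie (pL M), lin (pp (p:=M)),
      forall m : lcar (pL M), pp (pp m) = pp m &
      forall m1 m2 : lcar (pL M), pp (lbr m1 m2) = lbr (pp m1) m2 + lbr m1 (pp m2)].

Definition is_theta_hom (M1 M2 : pdSig) (f : lcar (pL M1) -> lcar (pL M2)) :=
  is_lie_hom f /\ forall m, f (pp m) = pp (f m).

Definition thom (M1 M2 : pdSig) := {f : lcar (pL M1) -> lcar (pL M2) | is_theta_hom f}.

Lemma thom_id_proof (M : pdSig) : is_theta_hom (M1 := M) (M2 := M) id.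
Proof. by split => //; split. Qed.

Definition thom_id (M : pdSig) : thom M M := exist _ id (thom_id_proof M).

Lemma thom_comp_proof (M1 M2 M3 : pdSig) (g : thom M2 M3) (f : thom M1 M2) :
  is_theta_hom (proj1_sig g \o proj1_sig f).
Proof.
case: g f => [g [[lg bg] pg]] [f [[lf bf] pf]] /=.
split; first split.
- exact: lin_comp.
- by move=> x y /=; rewrite bf bg.
- by move=> m /=; rewrite pf pg.
Qed.

Definition thom_comp (M1 M2 M3 : pdSig) (g : thom M2 M3) (f : thom M1 M2)
  : thom M1 M3 := exist _ _ (thom_comp_proof g f).

Definition is_free_theta (M : {fset nat}) (W : pdSig) (im : nat -> lcar (pL W)) :=
  is_theta W /\
  forall H : pdSig, is_theta H -> forall f : nat -> lcar (pL H),
  exists! h : thom W H, forall m, m \in M -> proj1_sig h (im m) = f m.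

Record freeThetaFamily := FreeThetaFamily {
  FT : {fset nat} -> pdSig;
  FTm : forall M, nat -> lcar (pL (FT M));
  FT_free : forall M, @is_free_theta M (FT M) (FTm M) }.

Section ThetaCategory.
Variable F : freeThetaFamily.

Definition tobj := {fset nat}.
Definition tW (A : tobj) : pdSig := FT F A.

Definition is_theta_aut (Po : tobj -> tobj)
    (Pm : forall A B, thom (tW A) (tW B) -> thom (tW (Po A)) (tW (Po B))) :=
  [/\ bijective Po,
      forall A B, bijective (Pm A B),
      forall A, Pm A A (thom_id (tW A)) = thom_id (tW (Po A)) &
      forall A B C (f : thom (tW A) (tW B)) (g : thom (tW B) (tW C)),
        Pm A C (thom_comp g f) = thom_comp (Pm B C g) (Pm A B f)].

Definition tT' (H W : pdSig) (T : lcar (pL W) -> Prop) (h : thom W H) : Prop :=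
  forall w, T w -> proj1_sig h w = 0.

Definition tT'' (H W : pdSig) (T : lcar (pL W) -> Prop) : lcar (pL W) -> Prop :=
  fun w => forall h : thom W H, tT' T h -> proj1_sig h w = 0.

Definition tClosed (H W : pdSig) := {T : lcar (pL W) -> Prop | tT'' H T = T}.

Definition tbeta (H : pdSig) (W1 W2 : pdSig) (T : tClosed H W2)
    (f g : thom W1 W2) : Prop :=
  forall w, proj1_sig T (proj1_sig f w - proj1_sig g w).

Definition theta_aut_equiv (H1 H2 : pdSig) : Prop :=
  exists (Po : tobj -> tobj)
         (Pm : forall A B, thom (tW A) (tW B) -> thom (tW (Po A)) (tW (Po B)))
         (alpha : forall A, tClosed H1 (tW A) -> tClosed H2 (tW (Po A))),
    [/\ is_theta_aut Pm,
        forall A, bijective (alpha A) &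
        forall A B (T : tClosed H1 (tW B)) (f' g' : thom (tW (Po A)) (tW (Po B))),
          (exists f g, [/\ Pm A B f = f', Pm A B g = g' & tbeta T f g])
          <-> tbeta (alpha B T) f' g'].
End ThetaCategory.

Definition F_lie (H : repSig) : lieSig :=
  @LieSig ((lcar (rL H) * rV H)%type : lmodType k)
    (fun x y => (lbr x.1 y.1, ract x.1 y.2 - ract y.1 x.2)).

Definition Frep (H : repSig) : pdSig :=
  @PdSig (F_lie H) (fun x : lcar (rL H) * rV H => (0, x.2)).

End Defs.

(* The automorphism Phi of Xi^0 is pinned down on the free objects W(M,M)
   up to isomorphism by categorical structure alone.  The initial object is
   W({},{}); the atoms (non-initial objects that are not coproducts of two
   non-initial ones) are exactly the W({x},{}) and W({},{y}), and the two kinds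
   are not isomorphic.  Hence Phi preserves or swaps the two kinds; either way,
   W(M,M) being the coproduct of the W({m},{}) and W({},{m}), m in M, gives
   Phi(W(M,M)) ~ W(M,M).
   In characteristic 0 the identity [p a, p b] = 0 holds in every Lie algebra
   with projection-derivation, which makes F left adjoint to N |-> (N, N) with
   bracket [a - p a, b - p b] and action [l - p l, p v]; hence F(W(M,M)) is the
   free algebra F(M) of Theta.  F is fully faithful and matches H-closed sets of
   W(M,M) with F(H)-closed sets of F(M), compatibly with beta.  Conjugating Phi
   and alpha by these identifications and by the isomorphisms
   Phi(W(M,M)) ~ W(M,M) gives an automorphism of Theta^0 which is the identity
   on objects, together with the required bijections of closed sets. *)

From HB Require Import structures.
From mathcomp Require Import all_boot all_algebra.
From mathcomp Require Import finmap.
From Stdlib Require Import ProofIrrelevance FunctionalExtensionality.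
From Stdlib Require Import ClassicalEpsilon PropExtensionality.
Set Implicit Arguments. Unset Strict Implicit. Unset Printing Implicit Defensive.
Import GRing.Theory.
Local Open Scope ring_scope.

Polymorphic Lemma pair_ext (U V : Type) (x y : (U * V)%type) :
  x.1 = y.1 -> x.2 = y.2 -> x = y.
Proof. by case: x y => ? ? [? ?] /= -> ->. Qed.

Section Basics.
Variable k : fieldType.

Section Linear.
Variables (U V : lmodType k) (f : U -> V) (hf : lin f).

Lemma lin0 : f 0 = 0.
Proof.
have h := hf 1 0 0; rewrite !scale1r (addr0 (0:U)) in h.
by apply: (@addrI _ (f 0)); rewrite addr0 -{1}h.
Qed.

Lemma linD x y : f (x + y) = f x + f y.
Proof. by have := hf 1 x y; rewrite !scale1r. Qed.

Lemma linZ a x : f (a *: x) = a *: f x.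
Proof. by have := hf a x 0; rewrite !addr0 lin0 addr0. Qed.

Lemma linN x : f (- x) = - f x.
Proof. by rewrite -scaleN1r linZ scaleN1r. Qed.

Lemma linB x y : f (x - y) = f x - f y.
Proof. by rewrite linD linN. Qed.
End Linear.

Lemma lin_cst0 (U V : lmodType k) : lin (fun _ : U => 0 : V).
Proof. by move=> a x y; rewrite scaler0 addr0. Qed.

Section LieAlgebra.
Variables (L : lieSig k) (hL : is_lie L).
Local Notation br := (@lbr k L).

Lemma brDl x y z : br (x + y) z = br x z + br y z.
Proof. by case: hL => _ h _ _; rewrite (linD (h z)). Qed.
Lemma brDr x y z : br z (x + y) = br z x + br z y.
Proof. by case: hL => h _ _ _; rewrite (linD (h z)). Qed.
Lemma brZl a x z : br (a *: x) z = a *: br x z.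
Proof. by case: hL => _ h _ _; rewrite (linZ (h z)). Qed.
Lemma brZr a x z : br z (a *: x) = a *: br z x.
Proof. by case: hL => h _ _ _; rewrite (linZ (h z)). Qed.
Lemma brNr x z : br z (- x) = - br z x.
Proof. by case: hL => h _ _ _; rewrite (linN (h z)). Qed.
Lemma br0l z : br 0 z = 0.
Proof. by case: hL => _ h _ _; rewrite (lin0 (h z)). Qed.
Lemma br0r z : br z 0 = 0.
Proof. by case: hL => h _ _ _; rewrite (lin0 (h z)). Qed.
Lemma brxx x : br x x = 0.
Proof. by case: hL. Qed.

Lemma brC x y : br x y = - br y x.
Proof.
have := brxx (x + y); rewrite brDl !brDr !brxx add0r addr0 => /eqP.
by rewrite addr_eq0 => /eqP.
Qed.

Lemma jacobi x y z : br x (br y z) + br y (br z x) + br z (br x y) = 0.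
Proof. by case: hL. Qed.

Lemma br_leibniz a b c : br (br a b) c = br a (br b c) - br b (br a c).
Proof.
have J := jacobi a b c; rewrite (brC c a) brNr in J.
rewrite (brC _ c).
by move/eqP: J; rewrite addrC addr_eq0 => /eqP ->; rewrite opprK.
Qed.
End LieAlgebra.

Section Representation.
Variables (H : repSig k) (hH : is_rep H).
Local Notation act := (@ract k H).

Lemma rep_lie : is_lie (rL H). Proof. by case: hH. Qed.
Lemma act0l v : act (0 : lcar (rL H)) v = 0.
Proof. by case: hH => _ _ h _; rewrite (lin0 (h v)). Qed.
Lemma act0r l : act l (0 : rV H) = 0.
Proof. by case: hH => _ h _ _; rewrite (lin0 (h l)). Qed.
Lemma actDl l1 l2 v : act (l1 + l2) v = act l1 v + act l2 v.
Proof. by case: hH => _ _ h _; rewrite (linD (h v)). Qed.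
Lemma actDr l v1 v2 : act l (v1 + v2) = act l v1 + act l v2.
Proof. by case: hH => _ h _ _; rewrite (linD (h l)). Qed.
Lemma actBr l v1 v2 : act l (v1 - v2) = act l v1 - act l v2.
Proof. by case: hH => _ h _ _; rewrite (linB (h l)). Qed.
Lemma actZl a l v : act (a *: l) v = a *: act l v.
Proof. by case: hH => _ _ h _; rewrite (linZ (h v)). Qed.
Lemma actZr a l v : act l (a *: v) = a *: act l v.
Proof. by case: hH => _ h _ _; rewrite (linZ (h l)). Qed.
Lemma act_br l1 l2 v : act (lbr l1 l2) v = act l1 (act l2 v) - act l2 (act l1 v).
Proof. by case: hH. Qed.
End Representation.

Section RepHom.
Variables (H1 H2 : repSig k).

Lemma rhom_ext (f g : rhom H1 H2) :
  (forall l, (proj1_sig f).1 l = (proj1_sig g).1 l) ->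
  (forall v, (proj1_sig f).2 v = (proj1_sig g).2 v) -> f = g.
Proof.
case: f g => [[f1 f2] pf] [[g1 g2] pg] /= e1 e2.
have E1 : f1 = g1 by apply: functional_extensionality.
have E2 : f2 = g2 by apply: functional_extensionality.
by subst; f_equal; apply: proof_irrelevance.
Qed.

Lemma rhom_lin1 (f : rhom H1 H2) : lin (proj1_sig f).1.
Proof. by case: f => [[f1 f2] [[? ?] ? ?]]. Qed.
Lemma rhom_lin2 (f : rhom H1 H2) : lin (proj1_sig f).2.
Proof. by case: f => [[f1 f2] [[? ?] ? ?]]. Qed.
Lemma rhom_br (f : rhom H1 H2) x y :
  (proj1_sig f).1 (lbr x y) = lbr ((proj1_sig f).1 x) ((proj1_sig f).1 y).
Proof. by case: f => [[f1 f2] [[? h] ? ?]]. Qed.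
Lemma rhom_act (f : rhom H1 H2) l v :
  ract ((proj1_sig f).1 l) ((proj1_sig f).2 v) = (proj1_sig f).2 (ract l v).
Proof. by case: f => [[f1 f2] [[? ?] ? h]]. Qed.

Lemma rhom0_proof (hH2 : is_rep H2) :
  is_rep_hom (H1 := H1) (H2 := H2) (fun _ => 0) (fun _ => 0).
Proof.
split; first split.
- exact: lin_cst0.
- by move=> x y; rewrite br0l //; apply: rep_lie.
- exact: lin_cst0.
- by move=> l v; rewrite act0l.
Qed.
Definition rhom0 (hH2 : is_rep H2) : rhom H1 H2 :=
  exist (fun fg => is_rep_hom fg.1 fg.2) (fun _ => 0, fun _ => 0) (rhom0_proof hH2).
End RepHom.

Lemma rhom_compA (H1 H2 H3 H4 : repSig k) (h : rhom H3 H4) (g : rhom H2 H3)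
  (f : rhom H1 H2) : rhom_comp h (rhom_comp g f) = rhom_comp (rhom_comp h g) f.
Proof. exact: rhom_ext. Qed.
Lemma rhom_id_comp (H1 H2 : repSig k) (f : rhom H1 H2) : rhom_comp (rhom_id H2) f = f.
Proof. exact: rhom_ext. Qed.
Lemma rhom_comp_id (H1 H2 : repSig k) (f : rhom H1 H2) : rhom_comp f (rhom_id H1) = f.
Proof. exact: rhom_ext. Qed.

Lemma rhom_cancel1 (H1 H2 : repSig k) (f : rhom H1 H2) (g : rhom H2 H1) :
  rhom_comp g f = rhom_id H1 -> forall l, (proj1_sig g).1 ((proj1_sig f).1 l) = l.
Proof. by move=> e l; have := congr1 (fun r => (proj1_sig r).1 l) e. Qed.
Lemma rhom_cancel2 (H1 H2 : repSig k) (f : rhom H1 H2) (g : rhom H2 H1) :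
  rhom_comp g f = rhom_id H1 -> forall v, (proj1_sig g).2 ((proj1_sig f).2 v) = v.
Proof. by move=> e v; have := congr1 (fun r => (proj1_sig r).2 v) e. Qed.

Section ThetaHom.
Variables (M1 M2 : pdSig k).

Lemma thom_ext (f g : thom M1 M2) : (forall w, proj1_sig f w = proj1_sig g w) -> f = g.
Proof.
case: f g => [f pf] [g pg] /= e.
have E : f = g by apply: functional_extensionality.
by subst; f_equal; apply: proof_irrelevance.
Qed.

Lemma thom_lin (f : thom M1 M2) : lin (proj1_sig f).
Proof. by case: f => [f [[? ?] ?]]. Qed.
Lemma thom_br (f : thom M1 M2) x y :
  proj1_sig f (lbr x y) = lbr (proj1_sig f x) (proj1_sig f y).
Proof. by case: f => [f [[? h] ?]]. Qed.
Lemma thom_p (f : thom M1 M2) m : proj1_sig f (pp m) = pp (proj1_sig f m).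
Proof. by case: f => [f [[? ?] h]]. Qed.
End ThetaHom.

End Basics.

Section FreeReps.
Variables (k : fieldType) (F : freeRepFamily k).
Local Notation W := (xW F).
Local Notation Hom A B := (rhom (xW F A) (xW F B)).

Definition ix (A : xobj) : nat -> lcar (rL (W A)) := FWx F A.1 A.2.
Definition iy (A : xobj) : nat -> rV (W A) := FWy F A.1 A.2.

Lemma xW_rep A : is_rep (W A). Proof. exact: (FW_free F A.1 A.2).1. Qed.

Lemma free_rhom_eq (A : xobj) (H : repSig k) (hH : is_rep H) (h h' : rhom (W A) H) :
  (forall x, x \in A.1 -> (proj1_sig h).1 (ix A x) = (proj1_sig h').1 (ix A x)) ->
  (forall y, y \in A.2 -> (proj1_sig h).2 (iy A y) = (proj1_sig h').2 (iy A y)) ->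
  h = h'.
Proof.
move=> e1 e2.
have [h0 [_ u]] := (FW_free F A.1 A.2).2 H hH (fun x => (proj1_sig h).1 (ix A x))
   (fun y => (proj1_sig h).2 (iy A y)).
rewrite -(u h) ?(u h') //; split => //.
- by move=> x xA; rewrite e1.
- by move=> y yA; rewrite e2.
Qed.

Definition free_rhom (A : xobj) (H : repSig k) (hH : is_rep H)
   (f : nat -> lcar (rL H)) (g : nat -> rV H) : rhom (W A) H :=
  proj1_sig (constructive_indefinite_description _ ((FW_free F A.1 A.2).2 H hH f g)).

Lemma free_rhom_spec A H hH f g :
  (forall x, x \in A.1 -> (proj1_sig (@free_rhom A H hH f g)).1 (ix A x) = f x) /\
  (forall y, y \in A.2 -> (proj1_sig (@free_rhom A H hH f g)).2 (iy A y) = g y).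
Proof.
rewrite /free_rhom; case: constructive_indefinite_description => h [[h1 h2] _] /=.
by split.
Qed.

Lemma free_rhom_x A H hH f g x : x \in A.1 ->
  (proj1_sig (@free_rhom A H hH f g)).1 (ix A x) = f x.
Proof. exact: (free_rhom_spec A hH f g).1. Qed.
Lemma free_rhom_y A H hH f g y : y \in A.2 ->
  (proj1_sig (@free_rhom A H hH f g)).2 (iy A y) = g y.
Proof. exact: (free_rhom_spec A hH f g).2. Qed.

Definition zero_hom (A B : xobj) : Hom A B := rhom0 (W A) (xW_rep B).

Lemma zero_hom_comp A B C (f : Hom A B) : rhom_comp (zero_hom B C) f = zero_hom A C.
Proof. exact: rhom_ext. Qed.
Lemma comp_zero_hom A B C (f : Hom B C) : rhom_comp f (zero_hom A B) = zero_hom A C.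
Proof.
by apply: rhom_ext => /= *; [apply: (lin0 (rhom_lin1 f)) | apply: (lin0 (rhom_lin2 f))].
Qed.

Definition initial (A : xobj) := forall B (h h' : Hom A B), h = h'.

Definition coprod (C A B : xobj) (i1 : Hom A C) (i2 : Hom B C) :=
  forall D (f1 : Hom A D) (f2 : Hom B D),
    (exists h, rhom_comp h i1 = f1 /\ rhom_comp h i2 = f2) /\
    (forall h h' : Hom C D, rhom_comp h i1 = rhom_comp h' i1 ->
        rhom_comp h i2 = rhom_comp h' i2 -> h = h').

Definition iso (A B : xobj) :=
  exists (f : Hom A B) (g : Hom B A),
    rhom_comp g f = rhom_id (W A) /\ rhom_comp f g = rhom_id (W B).

Definition atom (A : xobj) :=
  ~ initial A /\ forall B1 B2 i1 i2, @coprod A B1 B2 i1 i2 -> initial B1 \/ initial B2.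

Lemma iso_sym A B : iso A B -> iso B A.
Proof. by case=> f [g [h1 h2]]; exists g, f. Qed.

Lemma iso_trans A B C : iso A B -> iso B C -> iso A C.
Proof.
case=> f [g [h1 h2]] [f' [g' [h1' h2']]].
exists (rhom_comp f' f), (rhom_comp g g'); split.
- by rewrite rhom_compA -(rhom_compA g g') h1' rhom_comp_id h1.
- by rewrite rhom_compA -(rhom_compA f' f) h2 rhom_comp_id h2'.
Qed.

Lemma initial_iso A B : initial A -> initial B -> iso A B.
Proof. by move=> iA iB; exists (zero_hom A B), (zero_hom B A); split; [exact: iA | exact: iB]. Qed.

Lemma coprod_sym C A B i1 i2 : @coprod C A B i1 i2 -> @coprod C B A i2 i1.
Proof.
move=> h D f1 f2; have [[u [u1 u2]] uu] := h D f2 f1; split.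
- by exists u.
- by move=> h1 h2 e1 e2; apply: uu.
Qed.

Lemma coprod_iso C A B i1 i2 C' A' B' j1 j2 :
  @coprod C A B i1 i2 -> @coprod C' A' B' j1 j2 -> iso A A' -> iso B B' -> iso C C'.
Proof.
move=> cC cC' [a [a' [ha1 ha2]]] [b [b' [hb1 hb2]]].
have [[u [u1 u2]] _] := cC C' (rhom_comp j1 a) (rhom_comp j2 b).
have [[v [v1 v2]] _] := cC' C (rhom_comp i1 a') (rhom_comp i2 b').
exists u, v; split.
- have [_ uq] := cC C i1 i2; apply: uq.
  + by rewrite -rhom_compA u1 rhom_compA v1 -rhom_compA ha1 rhom_comp_id rhom_id_comp.
  + by rewrite -rhom_compA u2 rhom_compA v2 -rhom_compA hb1 rhom_comp_id rhom_id_comp.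
- have [_ uq] := cC' C' j1 j2; apply: uq.
  + by rewrite -rhom_compA v1 rhom_compA u1 -rhom_compA ha2 rhom_comp_id rhom_id_comp.
  + by rewrite -rhom_compA v2 rhom_compA u2 -rhom_compA hb2 rhom_comp_id rhom_id_comp.
Qed.

Lemma coprod_zero_initial C A B i1 i2 :
  @coprod C A B i1 i2 -> i1 = zero_hom A C -> initial A.
Proof.
move=> cC e D h h'.
have [[u [u1 _]] _] := cC D h (zero_hom B D).
have [[u' [u1' _]] _] := cC D h' (zero_hom B D).
by rewrite -u1 -u1' e !comp_zero_hom.
Qed.

(* A coproduct decomposition of T yields an idempotent endomorphism e of T,
   and coef e is then 0 or 1. *)
Lemma atom_of_coef T (coef : Hom T T -> k) :
  ~ initial T -> {morph coef : e e' / rhom_comp e e' >-> e * e'} ->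
  coef (rhom_id _) = 1 -> coef (zero_hom T T) = 0 -> injective coef -> atom T.
Proof.
move=> nT cM c1 c0 ci; split => // B1 B2 i1 i2 cC.
have [[e [e1 e2]] uq] := cC T i1 (zero_hom B2 T).
have ee : rhom_comp e e = e.
  apply: uq; first by rewrite -rhom_compA e1.
  by rewrite -rhom_compA e2 comp_zero_hom.
have : coef e * (coef e - 1) = 0 by rewrite mulrBr mulr1 -cM ee subrr.
move/eqP; rewrite mulf_eq0 subr_eq0 => /orP[] /eqP ce.
- left; apply: (coprod_zero_initial cC); rewrite -e1.
  have -> : e = zero_hom T T by apply: ci; rewrite ce c0.
  by rewrite zero_hom_comp.
- right; apply: (coprod_zero_initial (coprod_sym cC)); rewrite -e2.
  have -> : e = rhom_id _ by apply: ci; rewrite ce c1.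
  by rewrite rhom_id_comp.
Qed.

Section Automorphism.
Variables (Po : xobj -> xobj) (Pm : forall A B, Hom A B -> Hom (Po A) (Po B)).
Hypothesis hP : is_xi_aut Pm.

Lemma aut_obj_surj B' : exists B, Po B = B'.
Proof. by case: hP => [[g _ h2]] _ _ _; exists (g B'). Qed.
Lemma aut_hom_inj A B : injective (@Pm A B).
Proof. by case: hP => _ h _ _; apply: bij_inj. Qed.
Lemma aut_hom_surj A B (f' : Hom (Po A) (Po B)) : exists f, Pm f = f'.
Proof. by case: hP => _ h _ _; case: (h A B) => g _ h2; exists (g f'). Qed.
Lemma aut_comp A B C (f : Hom A B) (g : Hom B C) :
  Pm (rhom_comp g f) = rhom_comp (Pm g) (Pm f).
Proof. by case: hP. Qed.
Lemma aut_id A : Pm (rhom_id (W A)) = rhom_id (W (Po A)).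
Proof. by case: hP. Qed.

Lemma initial_aut A : initial A <-> initial (Po A).
Proof.
split=> [iA B' | iA B h h'].
- case: (aut_obj_surj B') => B <- h h'.
  case: (aut_hom_surj h) => f <-; case: (aut_hom_surj h') => f' <-.
  by rewrite (iA B f f').
- by apply: aut_hom_inj; apply: iA.
Qed.

Lemma coprod_aut C A B i1 i2 :
  @coprod C A B i1 i2 <-> @coprod (Po C) (Po A) (Po B) (Pm i1) (Pm i2).
Proof.
split=> cC.
- move=> D'; case: (aut_obj_surj D') => D <- f1' f2'.
  case: (aut_hom_surj f1') => f1 <-; case: (aut_hom_surj f2') => f2 <-.
  have [[h [h1 h2]] uq] := cC D f1 f2; split.
  + by exists (Pm h); rewrite -!aut_comp h1 h2.
  + move=> g g'; case: (aut_hom_surj g) => u <-; case: (aut_hom_surj g') => u' <-.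
    rewrite -!aut_comp => /aut_hom_inj e1 /aut_hom_inj e2.
    by rewrite (uq u u').
- move=> D f1 f2; have [[h' [h1 h2]] uq] := cC (Po D) (Pm f1) (Pm f2); split.
  + case: (aut_hom_surj h') h1 h2 => h <-.
    by rewrite -!aut_comp => /aut_hom_inj h1 /aut_hom_inj h2; exists h.
  + move=> u u0 e1 e2; apply: aut_hom_inj; apply: uq; by rewrite -!aut_comp ?e1 ?e2.
Qed.

Lemma iso_aut A B : iso A B <-> iso (Po A) (Po B).
Proof.
split.
- case=> f [g [h1 h2]]; exists (Pm f), (Pm g).
  by rewrite -!aut_comp h1 h2 !aut_id.
- case=> f' [g' [h1 h2]].
  case: (aut_hom_surj f') h1 h2 => f <-; case: (aut_hom_surj g') => g <-.
  rewrite -!aut_comp -!aut_id => /aut_hom_inj h1 /aut_hom_inj h2.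
  by exists f, g.
Qed.

Lemma atom_aut A : atom A -> atom (Po A).
Proof.
case=> nA hA; split; first by rewrite -initial_aut.
move=> B1' B2'; case: (aut_obj_surj B1') => B1 <-; case: (aut_obj_surj B2') => B2 <- i1' i2'.
case: (aut_hom_surj i1') => i1 <-; case: (aut_hom_surj i2') => i2 <-.
by rewrite -coprod_aut => /hA [h|h]; [left|right]; rewrite -initial_aut.
Qed.
End Automorphism.

End FreeReps.

Local Open Scope fset_scope.

Section Atoms.
Variables (k : fieldType) (F : freeRepFamily k).
Local Notation W := (xW F).
Local Notation Hom A B := (rhom (xW F A) (xW F B)).
Local Notation ix := (ix F).
Local Notation iy := (iy F).
Local Notation xW_rep := (xW_rep F).
Local Notation free_rhom := (free_rhom F).
Local Notation free_rhom_x := (free_rhom_x F).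
Local Notation free_rhom_y := (free_rhom_y F).

Definition krep : repSig k :=
  @RepSig k (@LieSig k (k^o : lmodType k) (fun _ _ => 0)) (k^o : lmodType k) (fun _ _ => 0).

Lemma krep_is_rep : is_rep krep.
Proof.
split.
- split => //; try by move=> *; exact: lin_cst0.
  by move=> *; rewrite !addr0.
- by move=> *; apply: lin_cst0.
- by move=> *; apply: lin_cst0.
- by move=> *; rewrite subrr.
Qed.

Lemma ix_neq0 A x : x \in A.1 -> ix A x != 0.
Proof.
move=> xA; apply/eqP => e.
have := free_rhom_x krep_is_rep (fun _ => 1 : k^o) (fun _ => 1 : k^o) xA.
by rewrite e (lin0 (rhom_lin1 _)) => /eqP; rewrite eq_sym oner_eq0.
Qed.

Lemma iy_neq0 A y : y \in A.2 -> iy A y != 0.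
Proof.
move=> yA; apply/eqP => e.
have := free_rhom_y krep_is_rep (fun _ => 1 : k^o) (fun _ => 1 : k^o) yA.
by rewrite e (lin0 (rhom_lin2 _)) => /eqP; rewrite eq_sym oner_eq0.
Qed.

Lemma initialP A : initial F A <-> A.1 = fset0 /\ A.2 = fset0.
Proof.
split=> [iA | [e1 e2] B h h'].
- have e := iA A (rhom_id _) (zero_hom F A A); split.
  + apply/fsetP => x; rewrite in_fset0; apply/negP => xA.
    have := congr1 (fun r => (proj1_sig r).1 (ix A x)) e => /= /eqP.
    by rewrite (negbTE (ix_neq0 xA)).
  + apply/fsetP => y; rewrite in_fset0; apply/negP => yA.
    have := congr1 (fun r => (proj1_sig r).2 (iy A y)) e => /= /eqP.
    by rewrite (negbTE (iy_neq0 yA)).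
- apply: (free_rhom_eq (xW_rep B)) => z; by rewrite ?e1 ?e2 in_fset0.
Qed.

Definition incl (A1 A : xobj) : Hom A1 A := free_rhom A1 (xW_rep A) (ix A) (iy A).

Lemma coprod_incl (A A1 A2 : xobj) :
  A.1 = A1.1 `|` A2.1 -> A.2 = A1.2 `|` A2.2 ->
  [disjoint A1.1 & A2.1] -> [disjoint A1.2 & A2.2] ->
  coprod (incl A1 A) (incl A2 A).
Proof.
move=> E1 E2 /fdisjointP d1 /fdisjointP d2 D f1 f2.
have s1 x : x \in A1.1 -> x \in A.1 by rewrite E1 inE => ->.
have s2 x : x \in A2.1 -> x \in A.1 by rewrite E1 inE => ->; rewrite orbT.
have t1 y : y \in A1.2 -> y \in A.2 by rewrite E2 inE => ->.
have t2 y : y \in A2.2 -> y \in A.2 by rewrite E2 inE => ->; rewrite orbT.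
split.
- exists (free_rhom A (xW_rep D)
    (fun x => if x \in A1.1 then (proj1_sig f1).1 (ix A1 x) else (proj1_sig f2).1 (ix A2 x))
    (fun y => if y \in A1.2 then (proj1_sig f1).2 (iy A1 y) else (proj1_sig f2).2 (iy A2 y))).
  split; apply: (free_rhom_eq (xW_rep D)) => /=.
  + by move=> x xA; rewrite free_rhom_x // free_rhom_x ?s1 // xA.
  + by move=> y yA; rewrite free_rhom_y // free_rhom_y ?t1 // yA.
  + by move=> x xA; rewrite free_rhom_x // free_rhom_x ?s2 // (negbTE (contra (d1 x) _)) // negbK.
  + by move=> y yA; rewrite free_rhom_y // free_rhom_y ?t2 // (negbTE (contra (d2 y) _)) // negbK.
- move=> h h' e1 e2; apply: (free_rhom_eq (xW_rep D)).
  + move=> x; rewrite E1 inE => /orP [xA|xA].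
    * have := congr1 (fun r => (proj1_sig r).1 (ix A1 x)) e1 => /=.
      by rewrite free_rhom_x.
    * have := congr1 (fun r => (proj1_sig r).1 (ix A2 x)) e2 => /=.
      by rewrite free_rhom_x.
  + move=> y; rewrite E2 inE => /orP [yA|yA].
    * have := congr1 (fun r => (proj1_sig r).2 (iy A1 y)) e1 => /=.
      by rewrite free_rhom_y.
    * have := congr1 (fun r => (proj1_sig r).2 (iy A2 y)) e2 => /=.
      by rewrite free_rhom_y.
Qed.

Definition single_L (m : nat) : xobj := ([fset m], fset0).
Definition single_V (m : nat) : xobj := (fset0, [fset m]).

Lemma atom_cases A : atom F A -> (exists x, A = single_L x) \/ (exists y, A = single_V y).
Proof.
case: A => [X Y] [nA hA].
have E1 (Z : {fset nat}) z : z \in Z -> Z = [fset z] `|` Z `\ z by move=> zZ; rewrite fsetD1K.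
have d1 (Z : {fset nat}) z : [disjoint [fset z] & Z `\ z].
  by apply/fdisjointP => u; rewrite in_fset1 in_fsetD1 => ->.
have d0 (Z : {fset nat}) : [disjoint fset0 & Z] by apply/fdisjointP => u; rewrite in_fset0.
case: (fset_0Vmem X) => [EX | [x xX]]; last first.
- left; exists x.
  case: (hA _ _ _ _ (@coprod_incl (X, Y) ([fset x], fset0) (X `\ x, Y) (E1 _ _ xX)
           (esym (fset0U Y)) (d1 X x) (d0 Y))) => /initialP /= [E E'].
  + by move/fsetP: E => /(_ x); rewrite in_fset1 eqxx in_fset0.
  + by rewrite /single_L (E1 _ _ xX) E E' fsetU0.
- case: (fset_0Vmem Y) => [EY | [y yY]].
  + by exfalso; apply: nA; apply/initialP; rewrite EX EY.
  + right; exists y.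
    case: (hA _ _ _ _ (@coprod_incl (X, Y) (fset0, [fset y]) (fset0, Y `\ y)
             (etrans EX (esym (fsetU0 _))) (E1 _ _ yY) (d0 _) (d1 Y y)))
      => /initialP /= [E E'].
    * by move/fsetP: E' => /(_ y); rewrite in_fset1 eqxx in_fset0.
    * by rewrite /single_V EX (E1 _ _ yY) E' fsetU0.
Qed.

Section SingleL.
Variable m : nat.
Local Notation A := (single_L m).

Definition single_L_coord : rhom (W A) krep :=
  free_rhom A krep_is_rep (fun _ => 1 : k^o) (fun _ => 0 : k^o).

Lemma single_L_coord_gen : (proj1_sig single_L_coord).1 (ix A m) = 1.
Proof. by apply: free_rhom_x; rewrite inE. Qed.

Lemma single_L_embed_proof :
  is_rep_hom (H1 := krep) (H2 := W A) (fun c : k^o => (c : k) *: ix A m) (fun _ => 0).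
Proof.
have hL := rep_lie (xW_rep A).
split; first split.
- by move=> a x y; rewrite scalerDl scalerA.
- by move=> x y /=; rewrite scale0r brZl // brZr // brxx // !scaler0.
- exact: lin_cst0.
- by move=> l v /=; rewrite act0r //; apply: xW_rep.
Qed.
Definition single_L_embed : rhom krep (W A) := exist _ (_, _) single_L_embed_proof.

Lemma single_L_retract : rhom_comp single_L_embed single_L_coord = rhom_id _.
Proof.
apply: (free_rhom_eq (xW_rep A)) => /= z; rewrite ?in_fset0 // in_fset1 => /eqP ->.
by rewrite single_L_coord_gen scale1r.
Qed.

Lemma single_L_lie l : l = (proj1_sig single_L_coord).1 l *: ix A m.
Proof. by have := congr1 (fun r => (proj1_sig r).1 l) single_L_retract => /= ->. Qed.

Lemma atom_single_L : atom F A.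
Proof.
pose coef (e : Hom A A) : k := (proj1_sig single_L_coord).1 ((proj1_sig e).1 (ix A m)).
apply: (atom_of_coef (coef := coef)).
- by move/initialP => [/fsetP /(_ m)]; rewrite in_fset1 eqxx in_fset0.
- move=> e e'; rewrite /coef /= {1}(single_L_lie ((proj1_sig e').1 _)).
  by rewrite (linZ (rhom_lin1 e)) (linZ (rhom_lin1 single_L_coord)) mulrC.
- exact: single_L_coord_gen.
- exact: (lin0 (rhom_lin1 single_L_coord)).
- move=> e e' E; apply: (free_rhom_eq (xW_rep A)) => /= z; rewrite ?in_fset0 //.
  rewrite in_fset1 => /eqP ->.
  by rewrite (single_L_lie ((proj1_sig e).1 _)) (single_L_lie ((proj1_sig e').1 _)); congr (_ *: _).
Qed.
End SingleL.

Section SingleV.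
Variable m : nat.
Local Notation A := (single_V m).

Definition single_V_coord : rhom (W A) krep :=
  free_rhom A krep_is_rep (fun _ => 0 : k^o) (fun _ => 1 : k^o).

Lemma single_V_coord_gen : (proj1_sig single_V_coord).2 (iy A m) = 1.
Proof. by apply: free_rhom_y; rewrite inE. Qed.

Lemma single_V_embed_proof :
  is_rep_hom (H1 := krep) (H2 := W A) (fun _ => 0) (fun c : k^o => (c : k) *: iy A m).
Proof.
have hL := rep_lie (xW_rep A).
split; first split.
- exact: lin_cst0.
- by move=> x y /=; rewrite br0l.
- by move=> a x y; rewrite scalerDl scalerA.
- by move=> l v /=; rewrite act0l ?scale0r //; apply: xW_rep.
Qed.
Definition single_V_embed : rhom krep (W A) := exist _ (_, _) single_V_embed_proof.

Lemma single_V_retract : rhom_comp single_V_embed single_V_coord = rhom_id _.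
Proof.
apply: (free_rhom_eq (xW_rep A)) => /= z; rewrite ?in_fset0 // in_fset1 => /eqP ->.
by rewrite single_V_coord_gen scale1r.
Qed.

Lemma single_V_mod v : v = (proj1_sig single_V_coord).2 v *: iy A m.
Proof. by have := congr1 (fun r => (proj1_sig r).2 v) single_V_retract => /= ->. Qed.

Lemma single_V_lie (l : lcar (rL (W A))) : l = 0.
Proof. by have := congr1 (fun r => (proj1_sig r).1 l) single_V_retract => /= <-. Qed.

Lemma atom_single_V : atom F A.
Proof.
pose coef (e : Hom A A) : k := (proj1_sig single_V_coord).2 ((proj1_sig e).2 (iy A m)).
apply: (atom_of_coef (coef := coef)).
- by move/initialP => [_ /fsetP /(_ m)]; rewrite in_fset1 eqxx in_fset0.
- move=> e e'; rewrite /coef /= {1}(single_V_mod ((proj1_sig e').2 _)).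
  by rewrite (linZ (rhom_lin2 e)) (linZ (rhom_lin2 single_V_coord)) mulrC.
- exact: single_V_coord_gen.
- exact: (lin0 (rhom_lin2 single_V_coord)).
- move=> e e' E; apply: (free_rhom_eq (xW_rep A)) => /= z; rewrite ?in_fset0 //.
  rewrite in_fset1 => /eqP ->.
  by rewrite (single_V_mod ((proj1_sig e).2 _)) (single_V_mod ((proj1_sig e').2 _)); congr (_ *: _).
Qed.
End SingleV.

Lemma single_L_V_not_iso m n : ~ iso F (single_L m) (single_V n).
Proof.
case=> f [g [e _]].
have := congr1 (fun r => (proj1_sig r).1 (ix (single_L m) m)) e => /=.
rewrite (single_V_lie ((proj1_sig f).1 _)) (lin0 (rhom_lin1 g)) => /eqP.
by rewrite eq_sym (negbTE (ix_neq0 _)) // inE.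
Qed.

Lemma single_L_iso m n : iso F (single_L m) (single_L n).
Proof.
pose hom a b : Hom (single_L a) (single_L b) :=
  free_rhom _ (xW_rep _) (fun _ => ix (single_L b) b) (fun _ => 0).
exists (hom m n), (hom n m).
split; apply: (free_rhom_eq (xW_rep _)) => /= z; rewrite ?in_fset0 // in_fset1 => /eqP ->.
all: by rewrite !free_rhom_x ?inE.
Qed.

Lemma single_V_iso m n : iso F (single_V m) (single_V n).
Proof.
pose hom a b : Hom (single_V a) (single_V b) :=
  free_rhom _ (xW_rep _) (fun _ => 0) (fun _ => iy (single_V b) b).
exists (hom m n), (hom n m).
split; apply: (free_rhom_eq (xW_rep _)) => /= z; rewrite ?in_fset0 // in_fset1 => /eqP ->.
all: by rewrite !free_rhom_y ?inE.
Qed.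

Lemma atom_iso_single A m : atom F A -> iso F A (single_L m) \/ iso F A (single_V m).
Proof.
case/atom_cases => [[x ->] | [y ->]]; [left; exact: single_L_iso | right; exact: single_V_iso].
Qed.

Definition diag (M : {fset nat}) : xobj := (M, M).

Lemma coprod_diag1 m :
  coprod (incl (single_L m) (diag [fset m])) (incl (single_V m) (diag [fset m])).
Proof.
by apply: coprod_incl; rewrite /= ?fsetU0 ?fset0U //; apply/fdisjointP => z; rewrite in_fset0.
Qed.

Lemma coprod_diagD1 M m : m \in M ->
  coprod (incl (diag [fset m]) (diag M)) (incl (diag (M `\ m)) (diag M)).
Proof.
have d : [disjoint [fset m] & M `\ m] by apply/fdisjointP => z; rewrite in_fset1 in_fsetD1 => ->.
by move=> mM; apply: coprod_incl; rewrite /= ?fsetD1K.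
Qed.

Section AutomorphismOnDiag.
Variables (Po : xobj -> xobj) (Pm : forall A B, Hom A B -> Hom (Po A) (Po B)).
Hypothesis hP : is_xi_aut Pm.

Lemma aut_singles m :
  (iso F (Po (single_L m)) (single_L m) /\ iso F (Po (single_V m)) (single_V m)) \/
  (iso F (Po (single_L m)) (single_V m) /\ iso F (Po (single_V m)) (single_L m)).
Proof.
have nLV : ~ iso F (Po (single_L m)) (Po (single_V m)).
  by move=> i; apply: (@single_L_V_not_iso m m); apply/(iso_aut hP).
case: (atom_iso_single m (atom_aut hP (atom_single_L m))) => iL;
case: (atom_iso_single m (atom_aut hP (atom_single_V m))) => iV;
  try by [left | right].
all: by case: nLV; apply: iso_trans iL (iso_sym iV).
Qed.

Lemma aut_diag1 m : iso F (Po (diag [fset m])) (diag [fset m]).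
Proof.
have c := @coprod_diag1 m; have c' := (coprod_aut hP _ _).1 c.
case: (aut_singles m) => [[iL iV] | [iL iV]].
- exact: coprod_iso c' c iL iV.
- exact: coprod_iso c' (coprod_sym c) iL iV.
Qed.

Lemma aut_diag M : iso F (Po (diag M)) (diag M).
Proof.
elim: #|`M| {-2}M (eqxx #|`M|) => [|n IH] {}M /eqP hM.
- have i0 : initial F (diag M) by apply/initialP; rewrite (cardfs0_eq hM).
  exact: initial_iso ((initial_aut hP _).1 i0) i0.
- case: (fset_0Vmem M) => [E | [m mM]]; first by rewrite E cardfs0 in hM.
  have c := coprod_diagD1 mM.
  apply: coprod_iso ((coprod_aut hP _ _).1 c) c (aut_diag1 m) (IH _ _).
  by rewrite (cardfsD1 m) mM add1n in hM; case: hM => ->.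
Qed.
End AutomorphismOnDiag.

End Atoms.

Local Close Scope fset_scope.

Lemma subr_cycle6 (V : zmodType) (a b c d e f : V) :
  a - b - (c - d) + (c - e - (f - b)) + (f - d - (a - e)) = 0.
Proof.
have E1 : a - b - (c - d) = (a + d) - (b + c) by rewrite opprB addrACA opprD.
have E2 : c - e - (f - b) = (b + c) - (e + f) by rewrite opprB addrACA opprD (addrC b).
have E3 : f - d - (a - e) = (e + f) - (a + d)
  by rewrite opprB addrACA opprD (addrC e) (addrC (-a)).
have K (x y z : V) : x - y + (y - z) = x - z by rewrite addrA subrK.
by rewrite E1 E2 E3 K K subrr.
Qed.

Section FrepAdjunction.
Variable k : fieldType.

Lemma Frep_theta (H : repSig k) : is_rep H -> is_theta (Frep H).
Proof.
move=> hH; have hL := rep_lie hH.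
split.
- split.
  + move=> x a y z; apply: pair_ext => /=; first by rewrite brDr // brZr.
    rewrite actDr // actZr // actDl // actZl // scalerBr opprD addrACA.
    by congr (_ + _).
  + move=> y a x z; apply: pair_ext => /=; first by rewrite brDl // brZl.
    rewrite actDl // actZl // actDr // actZr // scalerBr opprD addrACA.
    by congr (_ + _).
  + by move=> x; apply: pair_ext => /=; rewrite ?brxx ?subrr.
  + move=> x y z; apply: pair_ext => /=; first exact: jacobi.
    by rewrite !actBr // !act_br //; apply: subr_cycle6.
- by move=> a x y; apply: pair_ext => /=; rewrite ?scaler0 ?addr0.
- by [].
- move=> m1 m2; apply: pair_ext => /=.
  + by rewrite br0l // br0r // addr0.
  + by rewrite !act0l // sub0r subr0 addrC.
Qed.

Section Theta.
Variables (N : pdSig k) (hN : is_theta N).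
Local Notation p := (@pp k N).
Local Notation br := (@lbr k (pL N)).

Lemma theta_lie : is_lie (pL N). Proof. by case: hN. Qed.
Lemma pp_lin : lin p. Proof. by case: hN. Qed.
Lemma ppK x : p (p x) = p x. Proof. by case: hN. Qed.
Lemma pp_br a b : p (br a b) = br (p a) b + br a (p b). Proof. by case: hN. Qed.

Definition pcompl (x : lcar (pL N)) := x - p x.

Lemma pcompl_lin : lin pcompl.
Proof. by move=> a x y; rewrite /pcompl pp_lin scalerBr opprD addrACA. Qed.
Lemma pp_pcompl x : p (pcompl x) = 0.
Proof. by rewrite /pcompl (linB pp_lin) ppK subrr. Qed.
Lemma pcompl_br a b : pcompl (br (pcompl a) (pcompl b)) = br (pcompl a) (pcompl b).
Proof. by rewrite /pcompl pp_br !pp_pcompl br0l ?br0r ?addr0 ?subr0 //; apply: theta_lie. Qed.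
Lemma pp_br_pcompl a b : p (br (pcompl a) (p b)) = br (pcompl a) (p b).
Proof. by rewrite pp_br pp_pcompl ppK br0l ?add0r //; apply: theta_lie. Qed.

(* p [p a, p b] = 2 [p a, p b] by the derivation rule, while p is idempotent. *)
Lemma br_pp (char0 : has_pchar0 k) a b : br (p a) (p b) = 0.
Proof.
set c := br (p a) (p b).
have pc : p c = c + c by rewrite /c pp_br !ppK.
have cc : c + c = 0.
  have := ppK (br (p a) (p b)); rewrite -/c pc (linD pp_lin) pc => /eqP.
  by rewrite -subr_eq0 addrK => /eqP.
have two : (2%:R : k) != 0.
  by apply/negP => /(natf0_pchar (isT : (0 < 2)%N)) [r]; rewrite char0.
by move/eqP: cc; rewrite -mulr2n -scaler_nat scaler_eq0 (negbTE two) => /eqP.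
Qed.

(* The right adjoint of F. *)
Definition theta_rep : repSig k :=
  @RepSig k (@LieSig k (lcar (pL N)) (fun a b => br (pcompl a) (pcompl b)))
    (lcar (pL N)) (fun l v => br (pcompl l) (p v)).

Lemma theta_rep_is_rep : is_rep theta_rep.
Proof.
have hL := theta_lie; have ql := pcompl_lin; have pl := pp_lin.
have br_linr x : lin (br x) by case: hL => h _ _ _; apply: h.
have br_linl y : lin (fun x => br x y) by case: hL => _ h _ _; apply: h.
split.
- split.
  + by move=> x; apply: (lin_comp (U := lcar (pL N)) _ ql).
  + by move=> y; apply: (lin_comp (U := lcar (pL N)) (f := fun x => br x _) _ ql).
  + by move=> x; rewrite /= brxx.
  + by move=> x y z /=; rewrite !pcompl_br; apply: jacobi.
- by move=> l; apply: (lin_comp (U := lcar (pL N)) _ pl).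
- by move=> v; apply: (lin_comp (U := lcar (pL N)) (f := fun x => br x _) _ ql).
- by move=> l1 l2 v /=; rewrite pcompl_br !pp_br_pcompl // br_leibniz.
Qed.

Lemma theta_counit_proof (char0 : has_pchar0 k) :
  is_theta_hom (M1 := Frep theta_rep) (M2 := N) (fun x => pcompl x.1 + p x.2).
Proof.
have hL := theta_lie; have ql := pcompl_lin; have pl := pp_lin.
split; first split.
- move=> a x y /=; rewrite ql pl addrACA; congr (_ + _); exact: (esym (scalerDr _ _ _)).
- move=> x y /=; rewrite pcompl_br (linB pl) !pp_br_pcompl //.
  set a := pcompl x.1; set b := pcompl y.1; set c := p x.2; set d := p y.2.
  rewrite (brDl hL a c) (brDr hL b d a) (brDr hL b d c) (br_pp char0 x.2 y.2) addr0.
  by rewrite (brC hL c b) addrA.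
- by move=> m /=; rewrite (lin0 ql) add0r (linD pl) pp_pcompl ppK add0r.
Qed.
Definition theta_counit (char0 : has_pchar0 k) : thom (Frep theta_rep) N :=
  exist _ _ (theta_counit_proof char0).
End Theta.

Section Functor.
Variables (H1 H2 : repSig k).

Lemma Fmap_proof (f : rhom H1 H2) :
  is_theta_hom (M1 := Frep H1) (M2 := Frep H2)
    (fun x => ((proj1_sig f).1 x.1, (proj1_sig f).2 x.2)).
Proof.
split; first split.
- move=> a x y; apply: pair_ext => /=; [exact: (rhom_lin1 f) | exact: (rhom_lin2 f)].
- move=> x y; apply: pair_ext => /=; first exact: rhom_br.
  by rewrite (linB (rhom_lin2 f)) !rhom_act.
- by move=> m; apply: pair_ext => //=; apply: (lin0 (rhom_lin1 f)).
Qed.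
Definition Fmap (f : rhom H1 H2) : thom (Frep H1) (Frep H2) := exist _ _ (Fmap_proof f).
End Functor.

Lemma Fmap_comp (H1 H2 H3 : repSig k) (g : rhom H2 H3) (f : rhom H1 H2) :
  Fmap (rhom_comp g f) = thom_comp (Fmap g) (Fmap f).
Proof. exact: thom_ext. Qed.
Lemma Fmap_id (H : repSig k) : Fmap (rhom_id H) = thom_id _.
Proof. by apply: thom_ext => -[]. Qed.

Section Transpose.
Variables (H : repSig k) (hH : is_rep H) (N : pdSig k) (g : thom (Frep H) N).
Local Notation FH := (lcar (pL (Frep H))).

Lemma thom_Frep_L l : pp (proj1_sig g (l, 0)) = 0.
Proof. by rewrite -thom_p; apply: (lin0 (thom_lin g) : proj1_sig g (0 : FH) = 0). Qed.
Lemma thom_Frep_V v : pp (proj1_sig g (0, v)) = proj1_sig g (0, v).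
Proof. by rewrite -thom_p. Qed.
Lemma pcompl_thom_Frep_L l : pcompl (proj1_sig g (l, 0)) = proj1_sig g (l, 0).
Proof. by rewrite /pcompl thom_Frep_L subr0. Qed.

Lemma Frep_inL (a : k) (x y : lcar (rL H)) : ((a *: x + y, 0) : FH) = a *: (x, 0) + (y, 0).
Proof. by apply: pair_ext => /=; rewrite ?scaler0 ?addr0. Qed.
Lemma Frep_inV (a : k) (x y : rV H) : ((0, a *: x + y) : FH) = a *: (0, x) + (0, y).
Proof. by apply: pair_ext => /=; rewrite ?scaler0 ?addr0. Qed.
Lemma Frep_brL x y : ((lbr x y, 0) : FH) = @lbr k (pL (Frep H)) (x, 0) (y, 0).
Proof. by apply: pair_ext => //=; rewrite !act0r // subrr. Qed.
Lemma Frep_brLV l v : ((0, ract l v) : FH) = @lbr k (pL (Frep H)) (l, 0) (0, v).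
Proof. by apply: pair_ext => /=; rewrite ?br0r ?act0l ?subr0 //; apply: rep_lie. Qed.

Lemma transpose_proof : is_rep_hom (H1 := H) (H2 := theta_rep N)
   (fun l => proj1_sig g (l, 0)) (fun v => proj1_sig g (0, v)).
Proof.
have gl := thom_lin g.
split; first split.
- by move=> a x y /=; rewrite Frep_inL gl.
- by move=> x y /=; rewrite Frep_brL (thom_br g) !pcompl_thom_Frep_L.
- by move=> a x y /=; rewrite Frep_inV gl.
- by move=> l v /=; rewrite Frep_brLV (thom_br g) pcompl_thom_Frep_L thom_Frep_V.
Qed.
Definition transpose : rhom H (theta_rep N) :=
  exist (fun fg => is_rep_hom fg.1 fg.2) (_, _) transpose_proof.

Lemma counit_transpose (hN : is_theta N) (char0 : has_pchar0 k) :
  thom_comp (theta_counit hN char0) (Fmap transpose) = g.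
Proof.
apply: thom_ext => x /=; rewrite pcompl_thom_Frep_L thom_Frep_V -(linD (thom_lin g)).
by congr (proj1_sig g _); case: x => a b; apply: pair_ext => /=; rewrite ?addr0 ?add0r.
Qed.
End Transpose.

Lemma Frep_proj_proof (H : repSig k) (hH : is_rep H) :
  is_rep_hom (H1 := theta_rep (Frep H)) (H2 := H) fst snd.
Proof.
have hL := rep_lie hH.
split; first split => //.
- by move=> x y /=; rewrite !subr0.
- by [].
- by move=> l v /=; rewrite subr0 act0l // subr0.
Qed.
Definition Frep_proj (H : repSig k) (hH : is_rep H) : rhom (theta_rep (Frep H)) H :=
  exist (fun fg => is_rep_hom fg.1 fg.2) (_, _) (Frep_proj_proof hH).

Section FrepHom.
Variables (H1 H2 : repSig k) (g : thom (Frep H1) (Frep H2)).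

Lemma thom_Frep_L2 l : (proj1_sig g (l, 0)).2 = 0.
Proof. exact: (congr1 snd (thom_Frep_L g l)). Qed.
Lemma thom_Frep_V1 v : (proj1_sig g (0, v)).1 = 0.
Proof. exact: (esym (congr1 fst (thom_Frep_V g v))). Qed.
End FrepHom.

Section FullyFaithful.
Variables (H1 H2 : repSig k) (hH1 : is_rep H1) (hH2 : is_rep H2).

Definition Fmap_inv (g : thom (Frep H1) (Frep H2)) : rhom H1 H2 :=
  rhom_comp (Frep_proj hH2) (transpose hH1 g).

Lemma Fmap_invK g : Fmap (Fmap_inv g) = g.
Proof.
apply: thom_ext => x /=.
have E : x = ((x.1, 0) : lcar (pL (Frep H1))) + (0, x.2).
  by case: x => a b; apply: pair_ext => /=; rewrite ?addr0 ?add0r.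
rewrite {3}E (linD (thom_lin g)); apply: pair_ext => /=.
- by rewrite thom_Frep_V1 addr0.
- by rewrite thom_Frep_L2 add0r.
Qed.

Lemma Fmap_Fmap_inv f : Fmap_inv (Fmap f) = f.
Proof. exact: rhom_ext. Qed.

Lemma Fmap_inj : injective (@Fmap H1 H2).
Proof. by move=> f f' e; rewrite -(Fmap_Fmap_inv f) e Fmap_Fmap_inv. Qed.
End FullyFaithful.

End FrepAdjunction.

Lemma free_theta_eq (k : fieldType) (M : {fset nat}) (W : pdSig k) im
  (hW : @is_free_theta k M W im) (H : pdSig k) (hH : is_theta H) (g g' : thom W H) :
  (forall m, m \in M -> proj1_sig g (im m) = proj1_sig g' (im m)) -> g = g'.
Proof.
move=> e; have [h0 [_ u]] := hW.2 H hH (fun m => proj1_sig g (im m)).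
by rewrite -(u g) ?(u g') // => m mM; rewrite e.
Qed.

Section FreeTheta.
Variables (k : fieldType) (char0 : has_pchar0 k) (F : freeRepFamily k).
Local Notation WD M := (xW F (diag M)).

Definition Fgen M (m : nat) : lcar (pL (Frep (WD M))) := (ix F (diag M) m, iy F (diag M) m).

Lemma Fgen_V M m : ((0, iy F (diag M) m) : lcar (pL (Frep (WD M)))) = pp (Fgen M m).
Proof. by []. Qed.
Lemma Fgen_L M m :
  ((ix F (diag M) m, 0) : lcar (pL (Frep (WD M)))) = Fgen M m - pp (Fgen M m).
Proof. by apply: pair_ext => /=; rewrite ?subr0 ?subrr. Qed.

(* A theta-map F(W(M,M)) -> N is determined by its rep-transpose
   W(M,M) -> theta_rep N, which is free on the generators. *)
Lemma Frep_diag_free M : @is_free_theta k M (Frep (WD M)) (Fgen M).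
Proof.
have hW := xW_rep F (diag M).
split; first exact: Frep_theta hW.
move=> N hN f.
pose h := free_rhom F (diag M) (theta_rep_is_rep hN) (fun m => pcompl (f m)) (fun m => pp (f m)).
have hx m : m \in M -> (proj1_sig h).1 (ix F (diag M) m) = pcompl (f m).
  by move=> mM; rewrite /h free_rhom_x.
have hy m : m \in M -> (proj1_sig h).2 (iy F (diag M) m) = pp (f m).
  by move=> mM; rewrite /h free_rhom_y.
exists (thom_comp (theta_counit hN char0) (Fmap h)); split.
- move=> m mM /=; rewrite hx // hy //.
  by rewrite /pcompl (linB (pp_lin hN)) !(ppK hN) subrr subr0 subrK.
- move=> g hg; rewrite -(counit_transpose hW g hN char0); congr (thom_comp _ (Fmap _)).
  apply: (free_rhom_eq (theta_rep_is_rep hN)) => /= m mM.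
  + by rewrite hx // Fgen_L (linB (thom_lin g)) (thom_p g) hg.
  + by rewrite hy // Fgen_V (thom_p g) hg.
Qed.

Variable FTh : freeThetaFamily k.
Local Notation FTM M := (FT FTh M).

Definition to_Fdiag M : thom (FTM M) (Frep (WD M)) :=
  proj1_sig (constructive_indefinite_description _
    ((FT_free FTh M).2 _ (Frep_theta (xW_rep F (diag M))) (Fgen M))).
Definition of_Fdiag M : thom (Frep (WD M)) (FTM M) :=
  proj1_sig (constructive_indefinite_description _
    ((Frep_diag_free M).2 _ (FT_free FTh M).1 (FTm FTh M))).

Lemma to_Fdiag_gen M m : m \in M -> proj1_sig (to_Fdiag M) (FTm FTh M m) = Fgen M m.
Proof.
rewrite /to_Fdiag; case: constructive_indefinite_description => h [h1 _] /=.
exact: h1.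
Qed.
Lemma of_Fdiag_gen M m : m \in M -> proj1_sig (of_Fdiag M) (Fgen M m) = FTm FTh M m.
Proof.
rewrite /of_Fdiag; case: constructive_indefinite_description => h [h1 _] /=.
exact: h1.
Qed.

Lemma to_FdiagK M w : proj1_sig (of_Fdiag M) (proj1_sig (to_Fdiag M) w) = w.
Proof.
have E : thom_comp (of_Fdiag M) (to_Fdiag M) = thom_id _.
  apply: (free_theta_eq (FT_free FTh M) (FT_free FTh M).1) => m mM /=.
  by rewrite to_Fdiag_gen // of_Fdiag_gen.
exact: (congr1 (fun r => proj1_sig r w) E).
Qed.
Lemma of_FdiagK M x : proj1_sig (to_Fdiag M) (proj1_sig (of_Fdiag M) x) = x.
Proof.
have E : thom_comp (to_Fdiag M) (of_Fdiag M) = thom_id _.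
  apply: (free_theta_eq (Frep_diag_free M) (Frep_theta (xW_rep F (diag M)))) => m mM /=.
  by rewrite of_Fdiag_gen // to_Fdiag_gen.
exact: (congr1 (fun r => proj1_sig r x) E).
Qed.
End FreeTheta.

Arguments to_FdiagK {k} char0 F FTh {M} w.
Arguments of_FdiagK {k} char0 F FTh {M} x.

Section ClosedSets.
Variable k : fieldType.

Section XiClosed.
Variable H : repSig k.

Lemma xClosed_ext (W : repSig k) (S S' : xClosed H W) :
  (forall l, (proj1_sig S).1 l <-> (proj1_sig S').1 l) ->
  (forall v, (proj1_sig S).2 v <-> (proj1_sig S').2 v) -> S = S'.
Proof.
case: S S' => [[S1 S2] pS] [[S1' S2'] pS'] /= e1 e2.
have E1 : S1 = S1' by apply: functional_extensionality => l; apply: propositional_extensionality.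
have E2 : S2 = S2' by apply: functional_extensionality => l; apply: propositional_extensionality.
by subst; f_equal; apply: proof_irrelevance.
Qed.

Lemma mem_xClosed1 (W : repSig k) (S : xClosed H W) l :
  (proj1_sig S).1 l <-> forall h : rhom W H, xT' (proj1_sig S) h -> (proj1_sig h).1 l = 0.
Proof.
case: S => [[S1 S2] pS] /=; have E := congr1 fst pS; rewrite /= in E.
by rewrite -[in X in X <-> _]E.
Qed.
Lemma mem_xClosed2 (W : repSig k) (S : xClosed H W) v :
  (proj1_sig S).2 v <-> forall h : rhom W H, xT' (proj1_sig S) h -> (proj1_sig h).2 v = 0.
Proof.
case: S => [[S1 S2] pS] /=; have E := congr1 snd pS; rewrite /= in E.
by rewrite -[in X in X <-> _]E.
Qed.

Lemma xClosed1_0 (W : repSig k) (S : xClosed H W) : (proj1_sig S).1 0.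
Proof. by apply/mem_xClosed1 => h _; apply: (lin0 (rhom_lin1 h)). Qed.
Lemma xClosed2_0 (W : repSig k) (S : xClosed H W) : (proj1_sig S).2 0.
Proof. by apply/mem_xClosed2 => h _; apply: (lin0 (rhom_lin2 h)). Qed.

Section Transport.
Variables (W1 W2 : repSig k) (u : rhom W1 W2) (u' : rhom W2 W1).
Hypothesis uK : rhom_comp u' u = rhom_id W1.
Hypothesis u'K : rhom_comp u u' = rhom_id W2.

Let uK1 := rhom_cancel1 uK.
Let uK2 := rhom_cancel2 uK.
Let u'K1 := rhom_cancel1 u'K.
Let u'K2 := rhom_cancel2 u'K.

Definition xsub_transport (S : xsub W1) : xsub W2 :=
  (fun l => S.1 ((proj1_sig u').1 l), fun v => S.2 ((proj1_sig u').2 v)).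

Lemma xsub_transport_closed (S : xClosed H W1) :
  xT'' H (xsub_transport (proj1_sig S)) = xsub_transport (proj1_sig S).
Proof.
have to1 (h : rhom W2 H) :
    xT' (xsub_transport (proj1_sig S)) h -> xT' (proj1_sig S) (rhom_comp h u).
  by case=> h1 h2; split => /= x Sx; [apply: h1 | apply: h2]; rewrite /xsub_transport /= ?uK1 ?uK2.
have to2 (h : rhom W1 H) :
    xT' (proj1_sig S) h -> xT' (xsub_transport (proj1_sig S)) (rhom_comp h u').
  by case=> h1 h2; split => /= x Sx; [apply: h1 | apply: h2].
apply: pair_ext; apply: functional_extensionality => x;
  apply: propositional_extensionality; split => /=.
- by move=> hx; apply/mem_xClosed1 => h /to2 /hx.
- by move=> Sx h /to1 hT; rewrite -(u'K1 x); apply: (proj1 (mem_xClosed1 S _) Sx _ hT).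
- by move=> hx; apply/mem_xClosed2 => h /to2 /hx.
- by move=> Sx h /to1 hT; rewrite -(u'K2 x); apply: (proj1 (mem_xClosed2 S _) Sx _ hT).
Qed.

Definition xClosed_transport (S : xClosed H W1) : xClosed H W2 :=
  exist _ _ (xsub_transport_closed S).

Lemma xbeta_transport (W0 W0' : repSig k) (a : rhom W0 W0') (a' : rhom W0' W0)
  (aK : rhom_comp a' a = rhom_id W0) (S : xClosed H W1) (r s : rhom W0 W1) :
  xbeta S r s <-> xbeta (xClosed_transport S)
    (rhom_comp u (rhom_comp r a')) (rhom_comp u (rhom_comp s a')).
Proof.
have aK1 := rhom_cancel1 aK; have aK2 := rhom_cancel2 aK.
rewrite /xbeta /= /xsub_transport /=; split.
- by case=> h1 h2; split => x; rewrite ?(linB (rhom_lin1 u')) ?(linB (rhom_lin2 u')) ?uK1 ?uK2.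
- case=> h1 h2; split => x.
  + by have := h1 ((proj1_sig a).1 x); rewrite (linB (rhom_lin1 u')) !uK1 !aK1.
  + by have := h2 ((proj1_sig a).2 x); rewrite (linB (rhom_lin2 u')) !uK2 !aK2.
Qed.
End Transport.

Lemma xClosed_transport_bij (W1 W2 : repSig k) (u : rhom W1 W2) (u' : rhom W2 W1)
  (uK : rhom_comp u' u = rhom_id W1) (u'K : rhom_comp u u' = rhom_id W2) :
  bijective (xClosed_transport uK u'K).
Proof.
exists (xClosed_transport u'K uK) => S; apply: xClosed_ext => x /=.
- by rewrite (rhom_cancel1 uK).
- by rewrite (rhom_cancel2 uK).
- by rewrite (rhom_cancel1 u'K).
- by rewrite (rhom_cancel2 u'K).
Qed.
End XiClosed.

Section ThetaClosed.
Variables (Hh W : pdSig k).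

Lemma tClosed_ext (T T' : tClosed Hh W) :
  (forall w, proj1_sig T w <-> proj1_sig T' w) -> T = T'.
Proof.
case: T T' => [T pT] [T' pT'] /= e.
have E : T = T' by apply: functional_extensionality => w; apply: propositional_extensionality.
by subst; f_equal; apply: proof_irrelevance.
Qed.

Lemma mem_tClosed (T : tClosed Hh W) w :
  proj1_sig T w <-> forall g : thom W Hh, tT' (proj1_sig T) g -> proj1_sig g w = 0.
Proof. by case: T => T pT /=; rewrite -[in X in X <-> _]pT. Qed.

Variable T : tClosed Hh W.

Lemma tClosedD x y : proj1_sig T x -> proj1_sig T y -> proj1_sig T (x + y).
Proof.
move=> /mem_tClosed hx /mem_tClosed hy; apply/mem_tClosed => g hg.
by rewrite (linD (thom_lin g)) hx ?hy ?addr0.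
Qed.
Lemma tClosedB x y : proj1_sig T x -> proj1_sig T y -> proj1_sig T (x - y).
Proof.
move=> /mem_tClosed hx /mem_tClosed hy; apply/mem_tClosed => g hg.
by rewrite (linB (thom_lin g)) hx ?hy ?subr0.
Qed.
End ThetaClosed.

Lemma tClosedP (H : repSig k) (W : pdSig k) (T : tClosed (Frep H) W) x :
  proj1_sig T x -> proj1_sig T (pp x).
Proof. by move=> /mem_tClosed hx; apply/mem_tClosed => g hg; rewrite thom_p hx. Qed.

End ClosedSets.

Section Correspondence.
Variables (k : fieldType) (char0 : has_pchar0 k).
Variables (F : freeRepFamily k) (FTh : freeThetaFamily k).
Variables (H : repSig k) (hH : is_rep H).
Local Notation to_Fdiag := (to_Fdiag F FTh).
Local Notation of_Fdiag := (of_Fdiag char0 F FTh).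
Local Notation FTM M := (FT FTh M).
Local Notation WD M := (xW F (diag M)).
Local Notation FWD M := (lcar (pL (Frep (WD M)))).
Local Notation to_FdiagK := (to_FdiagK char0 F FTh).
Local Notation of_FdiagK := (of_FdiagK char0 F FTh).

Lemma to_Fdiag_split B w :
  w = proj1_sig (of_Fdiag B) ((proj1_sig (to_Fdiag B) w).1, 0) +
      proj1_sig (of_Fdiag B) (0, (proj1_sig (to_Fdiag B) w).2).
Proof.
rewrite -(linD (thom_lin _)) -{1}(to_FdiagK w); congr (proj1_sig _ _).
by apply: pair_ext => /=; rewrite ?addr0 ?add0r.
Qed.

Lemma of_Fdiag_L B w : proj1_sig (of_Fdiag B) ((proj1_sig (to_Fdiag B) w).1, 0) = w - pp w.
Proof.
have -> : (((proj1_sig (to_Fdiag B) w).1, 0) : FWD B) =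
    proj1_sig (to_Fdiag B) w - pp (proj1_sig (to_Fdiag B) w).
  by apply: pair_ext => /=; rewrite ?subr0 ?subrr.
by rewrite (linB (thom_lin _)) thom_p to_FdiagK.
Qed.

Lemma of_Fdiag_V B w : proj1_sig (of_Fdiag B) (0, (proj1_sig (to_Fdiag B) w).2) = pp w.
Proof.
have -> : ((0, (proj1_sig (to_Fdiag B) w).2) : FWD B) = pp (proj1_sig (to_Fdiag B) w) by [].
by rewrite thom_p to_FdiagK.
Qed.

Lemma tClosed_split B (T : tClosed (Frep H) (FTM B)) w :
  proj1_sig T w <->
    proj1_sig T (proj1_sig (of_Fdiag B) ((proj1_sig (to_Fdiag B) w).1, 0)) /\
    proj1_sig T (proj1_sig (of_Fdiag B) (0, (proj1_sig (to_Fdiag B) w).2)).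
Proof.
rewrite of_Fdiag_L of_Fdiag_V; split.
- by move=> hw; split; [apply: tClosedB => //; apply: tClosedP | apply: tClosedP].
- by case=> h1 h2; rewrite -(subrK (pp w) w); apply: tClosedD.
Qed.

Section ClosedSetsOnB.
Variable B : {fset nat}.
Let hW := xW_rep F (diag B).

Definition xsub_of_tClosed (T : tClosed (Frep H) (FTM B)) : xsub (WD B) :=
  (fun l => proj1_sig T (proj1_sig (of_Fdiag B) (l, 0)),
   fun v => proj1_sig T (proj1_sig (of_Fdiag B) (0, v))).

Definition tsub_of_xClosed (S : xClosed H (WD B)) : lcar (pL (FTM B)) -> Prop :=
  fun w => (proj1_sig S).1 (proj1_sig (to_Fdiag B) w).1 /\
           (proj1_sig S).2 (proj1_sig (to_Fdiag B) w).2.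

Lemma xT'_tT' (X : xsub (WD B)) (Y : lcar (pL (FTM B)) -> Prop) (h : rhom (WD B) H) :
  (forall w, Y w -> X.1 (proj1_sig (to_Fdiag B) w).1 /\ X.2 (proj1_sig (to_Fdiag B) w).2) ->
  xT' X h -> tT' Y (thom_comp (Fmap h) (to_Fdiag B)).
Proof. by move=> XY [h1 h2] w /XY [t1 t2]; apply: pair_ext => /=; [apply: h1 | apply: h2]. Qed.

Lemma tT'_xT' (X : xsub (WD B)) (Y : lcar (pL (FTM B)) -> Prop) (g : thom (FTM B) (Frep H)) :
  (forall l, X.1 l -> Y (proj1_sig (of_Fdiag B) (l, 0))) ->
  (forall v, X.2 v -> Y (proj1_sig (of_Fdiag B) (0, v))) ->
  tT' Y g -> xT' X (Fmap_inv hW hH (thom_comp g (of_Fdiag B))).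
Proof.
move=> XY1 XY2 hg; split => x Xx /=.
- by rewrite (hg _ (XY1 _ Xx)).
- by rewrite (hg _ (XY2 _ Xx)).
Qed.

Lemma xsub_of_tClosed_closed (T : tClosed (Frep H) (FTM B)) :
  xT'' H (xsub_of_tClosed T) = xsub_of_tClosed T.
Proof.
have k1 h := @xT'_tT' (xsub_of_tClosed T) (proj1_sig T) h (fun w => (tClosed_split T w).1).
have k2 g := @tT'_xT' (xsub_of_tClosed T) (proj1_sig T) g (fun _ => id) (fun _ => id).
apply: pair_ext; apply: functional_extensionality => x;
  apply: propositional_extensionality; split => /=.
- move=> hx; apply/mem_tClosed => g /k2 /hx /= e1.
  by apply: pair_ext => //=; apply: (thom_Frep_L2 (thom_comp g (of_Fdiag B))).
- move=> Tx h /k1; move/(proj1 (mem_tClosed T _) Tx).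
  by rewrite /= of_FdiagK => /(congr1 fst).
- move=> hx; apply/mem_tClosed => g /k2 /hx /= e2.
  by apply: pair_ext => //=; apply: (thom_Frep_V1 (thom_comp g (of_Fdiag B))).
- move=> Tx h /k1; move/(proj1 (mem_tClosed T _) Tx).
  by rewrite /= of_FdiagK => /(congr1 snd).
Qed.

Definition to_xClosed (T : tClosed (Frep H) (FTM B)) : xClosed H (WD B) :=
  exist _ _ (xsub_of_tClosed_closed T).

Lemma tsub_of_xClosed_closed (S : xClosed H (WD B)) :
  tT'' (Frep H) (tsub_of_xClosed S) = tsub_of_xClosed S.
Proof.
have k1 h := @xT'_tT' (proj1_sig S) (tsub_of_xClosed S) h (fun _ => id).
have k2 g : tT' (tsub_of_xClosed S) g ->
    xT' (proj1_sig S) (Fmap_inv hW hH (thom_comp g (of_Fdiag B))).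
  apply: tT'_xT' => x Sx; rewrite /tsub_of_xClosed of_FdiagK /=.
  - by split => //; apply: xClosed2_0.
  - by split => //; apply: xClosed1_0.
apply: functional_extensionality => w; apply: propositional_extensionality; split.
- move=> hw; split.
  + by apply/mem_xClosed1 => h /k1 /hw /(congr1 fst).
  + by apply/mem_xClosed2 => h /k1 /hw /(congr1 snd).
- case=> t1 t2 g hg.
  have /= e1 := proj1 (mem_xClosed1 S _) t1 _ (k2 _ hg).
  have /= e2 := proj1 (mem_xClosed2 S _) t2 _ (k2 _ hg).
  rewrite (to_Fdiag_split w) (linD (thom_lin g)); apply: pair_ext => /=.
  + by rewrite e1 (thom_Frep_V1 (thom_comp g (of_Fdiag B))) addr0.
  + by rewrite e2 (thom_Frep_L2 (thom_comp g (of_Fdiag B))) add0r.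
Qed.

Definition to_tClosed (S : xClosed H (WD B)) : tClosed (Frep H) (FTM B) :=
  exist _ _ (tsub_of_xClosed_closed S).

Lemma to_xClosedK : cancel to_xClosed to_tClosed.
Proof.
by move=> T; apply: tClosed_ext => w /=; rewrite /tsub_of_xClosed /= -tClosed_split.
Qed.

Lemma to_tClosedK : cancel to_tClosed to_xClosed.
Proof.
move=> S; apply: xClosed_ext => x /=; rewrite /tsub_of_xClosed of_FdiagK /=.
- by split => [[] | ?] // ; split => //; apply: xClosed2_0.
- by split => [[] | ?] // ; split => //; apply: xClosed1_0.
Qed.

Lemma to_xClosed_bij : bijective to_xClosed.
Proof. exact: Bijective to_xClosedK to_tClosedK. Qed.
Lemma to_tClosed_bij : bijective to_tClosed.
Proof. exact: Bijective to_tClosedK to_xClosedK. Qed.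
End ClosedSetsOnB.

Section Morphisms.
Variables A B : {fset nat}.
Let hWA := xW_rep F (diag A).
Let hWB := xW_rep F (diag B).

Definition to_xhom (f : thom (FTM A) (FTM B)) : rhom (WD A) (WD B) :=
  Fmap_inv hWA hWB (thom_comp (to_Fdiag B) (thom_comp f (of_Fdiag A))).
Definition to_thom (r : rhom (WD A) (WD B)) : thom (FTM A) (FTM B) :=
  thom_comp (of_Fdiag B) (thom_comp (Fmap r) (to_Fdiag A)).

Lemma to_xhom_L (f : thom (FTM A) (FTM B)) l :
  proj1_sig (of_Fdiag B) ((proj1_sig (to_xhom f)).1 l, 0) =
  proj1_sig f (proj1_sig (of_Fdiag A) (l, 0)).
Proof.
set g := thom_comp (to_Fdiag B) (thom_comp f (of_Fdiag A)).
have -> : (((proj1_sig (to_xhom f)).1 l, 0) : FWD B) = proj1_sig g (l, 0).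
  by apply: pair_ext => //=; rewrite (thom_Frep_L2 g).
exact: to_FdiagK.
Qed.

Lemma to_xhom_V (f : thom (FTM A) (FTM B)) v :
  proj1_sig (of_Fdiag B) (0, (proj1_sig (to_xhom f)).2 v) =
  proj1_sig f (proj1_sig (of_Fdiag A) (0, v)).
Proof.
set g := thom_comp (to_Fdiag B) (thom_comp f (of_Fdiag A)).
have -> : ((0, (proj1_sig (to_xhom f)).2 v) : FWD B) = proj1_sig g (0, v).
  by apply: pair_ext => //=; rewrite (thom_Frep_V1 g).
exact: to_FdiagK.
Qed.

Lemma tbeta_xbeta (T : tClosed (Frep H) (FTM B)) (f g : thom (FTM A) (FTM B)) :
  tbeta T f g <-> xbeta (to_xClosed T) (to_xhom f) (to_xhom g).
Proof.
have e1 l : proj1_sig (of_Fdiag B) ((proj1_sig (to_xhom f)).1 l - (proj1_sig (to_xhom g)).1 l, 0) =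
    proj1_sig f (proj1_sig (of_Fdiag A) (l, 0)) - proj1_sig g (proj1_sig (of_Fdiag A) (l, 0)).
  have -> : (((proj1_sig (to_xhom f)).1 l - (proj1_sig (to_xhom g)).1 l, 0) : FWD B) =
      ((proj1_sig (to_xhom f)).1 l, 0) - ((proj1_sig (to_xhom g)).1 l, 0).
    by apply: pair_ext; rewrite /= ?subrr.
  by rewrite (linB (thom_lin _)) !to_xhom_L.
have e2 v : proj1_sig (of_Fdiag B) (0, (proj1_sig (to_xhom f)).2 v - (proj1_sig (to_xhom g)).2 v) =
    proj1_sig f (proj1_sig (of_Fdiag A) (0, v)) - proj1_sig g (proj1_sig (of_Fdiag A) (0, v)).
  have -> : ((0, (proj1_sig (to_xhom f)).2 v - (proj1_sig (to_xhom g)).2 v) : FWD B) =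
      (0, (proj1_sig (to_xhom f)).2 v) - (0, (proj1_sig (to_xhom g)).2 v).
    by apply: pair_ext; rewrite /= ?subrr.
  by rewrite (linB (thom_lin _)) !to_xhom_V.
split=> [h | [h1 h2] w].
- by split => x /=; [rewrite e1 | rewrite e2]; apply: h.
- rewrite (to_Fdiag_split w) (linD (thom_lin f)) (linD (thom_lin g)) opprD addrACA.
  apply: tClosedD.
  + by move: (h1 (proj1_sig (to_Fdiag A) w).1); rewrite /= e1.
  + by move: (h2 (proj1_sig (to_Fdiag A) w).2); rewrite /= e2.
Qed.

Lemma xbeta_tbeta (S : xClosed H (WD B)) (r s : rhom (WD A) (WD B)) :
  xbeta S r s <-> tbeta (to_tClosed S) (to_thom r) (to_thom s).
Proof.
have E w : proj1_sig (to_Fdiag B) (proj1_sig (to_thom r) w - proj1_sig (to_thom s) w) =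
   proj1_sig (Fmap r) (proj1_sig (to_Fdiag A) w) - proj1_sig (Fmap s) (proj1_sig (to_Fdiag A) w).
  by rewrite (linB (thom_lin (to_Fdiag B))) /= !of_FdiagK.
rewrite /tbeta /to_tClosed /tsub_of_xClosed /=; split=> [[h1 h2] w | h].
- by rewrite E /=; split; [apply: h1 | apply: h2].
- split => x.
  + by have := h (proj1_sig (of_Fdiag A) (x, 0)); rewrite E of_FdiagK /= => -[].
  + by have := h (proj1_sig (of_Fdiag A) (0, x)); rewrite E of_FdiagK /= => -[].
Qed.

Lemma to_xhomK : cancel to_thom to_xhom.
Proof.
move=> r; apply: (Fmap_inj hWA hWB); rewrite /to_xhom Fmap_invK.
by apply: thom_ext => x /=; rewrite !of_FdiagK.
Qed.

Lemma to_thomK : cancel to_xhom to_thom.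
Proof.
move=> f; rewrite /to_thom /to_xhom Fmap_invK.
by apply: thom_ext => w /=; rewrite !to_FdiagK.
Qed.
End Morphisms.

Lemma to_xhom_comp A B C (f : thom (FTM A) (FTM B)) (g : thom (FTM B) (FTM C)) :
  to_xhom (thom_comp g f) = rhom_comp (to_xhom g) (to_xhom f).
Proof.
apply: (Fmap_inj (xW_rep F (diag A)) (xW_rep F (diag C))).
by rewrite Fmap_comp /to_xhom !Fmap_invK; apply: thom_ext => x /=; rewrite to_FdiagK.
Qed.

Lemma to_xhom_id A : to_xhom (thom_id (FTM A)) = rhom_id _.
Proof.
apply: (Fmap_inj (xW_rep F (diag A)) (xW_rep F (diag A))).
by rewrite Fmap_id /to_xhom Fmap_invK; apply: thom_ext => x /=; rewrite of_FdiagK.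
Qed.

Lemma to_thom_comp A B C (r : rhom (WD A) (WD B)) (s : rhom (WD B) (WD C)) :
  to_thom (rhom_comp s r) = thom_comp (to_thom s) (to_thom r).
Proof. by apply: thom_ext => w /=; rewrite of_FdiagK. Qed.

Lemma to_thom_id A : to_thom (rhom_id (WD A)) = thom_id _.
Proof. by rewrite /to_thom Fmap_id; apply: thom_ext => w /=; rewrite to_FdiagK. Qed.

End Correspondence.

Lemma iso_sig (k : fieldType) (F : freeRepFamily k) (A B : xobj) : iso F A B ->
  {fg : rhom (xW F A) (xW F B) * rhom (xW F B) (xW F A) |
     rhom_comp fg.2 fg.1 = rhom_id _ /\ rhom_comp fg.1 fg.2 = rhom_id _}.
Proof.
move=> h; apply: constructive_indefinite_description.
by case: h => f [g e]; exists (f, g).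
Qed.

Section Transfer.
Variables (k : fieldType) (char0 : has_pchar0 k).
Variables (FX : freeRepFamily k) (FTh : freeThetaFamily k).
Variables (H1 H2 : repSig k) (rep1 : is_rep H1) (rep2 : is_rep H2).
Variables (Po : xobj -> xobj)
  (Pm : forall A B, rhom (xW FX A) (xW FX B) -> rhom (xW FX (Po A)) (xW FX (Po B)))
  (alpha : forall A, xClosed H1 (xW FX A) -> xClosed H2 (xW FX (Po A))).
Hypotheses (hP : is_xi_aut Pm) (alpha_bij : forall A, bijective (@alpha A)).
Hypothesis alpha_beta : forall A B (T : xClosed H1 (xW FX B)) f' g',
  (exists f g, [/\ @Pm A B f = f', @Pm A B g = g' & xbeta T f g]) <-> xbeta (alpha T) f' g'.
Local Notation Hom A B := (rhom (xW FX A) (xW FX B)).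
Local Notation WD M := (xW FX (diag M)).

Let io M := proj1_sig (iso_sig (aut_diag hP M)).
Let ioK M : rhom_comp (io M).2 (io M).1 = rhom_id _ := (proj2_sig (iso_sig (aut_diag hP M))).1.
Let ioK' M : rhom_comp (io M).1 (io M).2 = rhom_id _ := (proj2_sig (iso_sig (aut_diag hP M))).2.

Definition aut_conj A B (f : Hom (diag A) (diag B)) : Hom (diag A) (diag B) :=
  rhom_comp (io B).1 (rhom_comp (Pm f) (io A).2).

Lemma aut_conj_bij A B : bijective (@aut_conj A B).
Proof.
have [_ hb _ _] := hP; case: (hb (diag A) (diag B)) => Pinv c1 c2.
exists (fun f' => Pinv (rhom_comp (io B).2 (rhom_comp f' (io A).1))) => f; rewrite /aut_conj.
- by rewrite !rhom_compA ioK rhom_id_comp -rhom_compA ioK rhom_comp_id c1.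
- by rewrite c2 !rhom_compA ioK' rhom_id_comp -rhom_compA ioK' rhom_comp_id.
Qed.

Lemma aut_conj_comp A B C (f : Hom (diag A) (diag B)) (g : Hom (diag B) (diag C)) :
  aut_conj (rhom_comp g f) = rhom_comp (aut_conj g) (aut_conj f).
Proof.
rewrite /aut_conj (aut_comp hP); apply: rhom_ext => x /=.
- by rewrite (rhom_cancel1 (ioK B)).
- by rewrite (rhom_cancel2 (ioK B)).
Qed.

Lemma aut_conj_id A : aut_conj (rhom_id (WD A)) = rhom_id _.
Proof. by rewrite /aut_conj (aut_id hP) rhom_id_comp ioK'. Qed.

Definition xClosed_conj B (S : xClosed H1 (WD B)) : xClosed H2 (WD B) :=
  xClosed_transport (ioK B) (ioK' B) (alpha S).

Lemma xbeta_conj A B (S : xClosed H1 (WD B)) (r s : Hom (diag A) (diag B)) :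
  xbeta S r s <-> xbeta (xClosed_conj S) (aut_conj r) (aut_conj s).
Proof.
apply: iff_trans (xbeta_transport (ioK B) (ioK' B) (ioK A) _ _ _).
rewrite -alpha_beta; split=> [h | [r0 [s0 [e1 e2 h]]]]; first by exists r, s.
by rewrite -(aut_hom_inj hP e1) -(aut_hom_inj hP e2).
Qed.

Lemma xClosed_conj_bij B : bijective (@xClosed_conj B).
Proof.
by rewrite /xClosed_conj; apply: bij_comp; [apply: xClosed_transport_bij | apply: alpha_bij].
Qed.

Definition theta_aut A B (f : thom (tW FTh A) (tW FTh B)) : thom (tW FTh A) (tW FTh B) :=
  to_thom char0 FTh (aut_conj (to_xhom char0 FX f)).

Definition tClosed_conj B (T : tClosed (Frep H1) (tW FTh B)) : tClosed (Frep H2) (tW FTh B) :=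
  to_tClosed char0 FTh rep2 (xClosed_conj (to_xClosed char0 FX rep1 T)).

Lemma theta_aut_bij A B : bijective (@theta_aut A B).
Proof.
rewrite /theta_aut; apply: bij_comp.
  by exists (@to_xhom _ char0 FX FTh A B); [exact: to_xhomK | exact: to_thomK].
apply: bij_comp; first exact: aut_conj_bij.
by exists (@to_thom _ char0 FX FTh A B); [exact: to_thomK | exact: to_xhomK].
Qed.

Lemma theta_aut_is_aut : is_theta_aut (Po := id) theta_aut.
Proof.
split.
- by exists id.
- exact: theta_aut_bij.
- by move=> A; rewrite /theta_aut to_xhom_id aut_conj_id to_thom_id.
- by move=> A B C f g; rewrite /theta_aut to_xhom_comp aut_conj_comp to_thom_comp.
Qed.

Lemma tClosed_conj_bij B : bijective (@tClosed_conj B).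
Proof.
rewrite /tClosed_conj; apply: bij_comp; first exact: to_tClosed_bij.
apply: bij_comp; [exact: xClosed_conj_bij | exact: to_xClosed_bij].
Qed.

Lemma tbeta_conj A B (T : tClosed (Frep H1) (tW FTh B)) (f g : thom (tW FTh A) (tW FTh B)) :
  tbeta T f g <-> tbeta (tClosed_conj T) (theta_aut f) (theta_aut g).
Proof.
apply: iff_trans (tbeta_xbeta char0 FX rep1 T f g) _.
apply: iff_trans (xbeta_conj _ _ _) _.
exact: (xbeta_tbeta char0 FTh rep2).
Qed.
Lemma tbeta_conj_image (A B : tobj) (T : tClosed (Frep H1) (tW FTh B))
  (f' g' : thom (tW FTh A) (tW FTh B)) :
  (exists f g, [/\ theta_aut f = f', theta_aut g = g' & tbeta T f g]) <->
  tbeta (tClosed_conj T) f' g'.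
Proof.
have [inv c1 c2] := theta_aut_bij A B.
rewrite -[f'](c2 f') -[g'](c2 g') -tbeta_conj; split=> [[f [g []]] | h].
- by move=> /(bij_inj (theta_aut_bij A B)) <- /(bij_inj (theta_aut_bij A B)) <-.
- by exists (inv f'), (inv g').
Qed.
End Transfer.

Theorem theorem6 (k : fieldType) (char0 : has_pchar0 k)
  (k_infinite : forall s : seq k, exists x : k, x \notin s)
  (FX : freeRepFamily k) (FTh : freeThetaFamily k)
  (H1 H2 : repSig k) (rep1 : is_rep H1) (rep2 : is_rep H2) :
  xi_aut_equiv FX H1 H2 -> theta_aut_equiv FTh (Frep H1) (Frep H2).
Proof.
case=> Po [Pm [alpha [hP alpha_bij alpha_beta]]].
exists id, (theta_aut char0 (FTh := FTh) hP), (tClosed_conj char0 rep1 rep2 alpha hP).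
split; [exact: theta_aut_is_aut | exact: tClosed_conj_bij | exact: tbeta_conj_image].
Qed.
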